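(* Let $R$ be a root system in $\mathbb{R}^N$ and let $R'=\{\alpha_1,\dots,\alpha_n\}$ be a positive orthogonal subsystem of $R$. For $i=1,\dots,n$ let $\tau_{\alpha_i}(x)=x-\frac{\langle x,\alpha_i\rangle}{|\alpha_i|^2}\alpha_i$ and define the operator $\rho_i$ on the space $\Pi^N$ of polynomial functions on $\mathbb{R}^N$ by $$(\rho_i f)(x)=\frac{f(x)-f(\tau_{\alpha_i}x)}{\langle x,\alpha_i\rangle}.$$ Then: (i) for all $i,j=1,\dots,n$, $[\rho_i,\rho_j]=\rho_i\rho_j-\rho_j\rho_i=0$; (ii) if $\alpha\in\mathbb{R}^N$ is orthogonal to $\alpha_i$, then $[\partial_\alpha,\rho_i]=0$, where $\partial_\alpha$ denotes the directional derivative in direction $\alpha$.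
   Context: $\langle\cdot,\cdot\rangle$ is the Euclidean inner product on $\mathbb{R}^N$ and $|x|=\sqrt{\langle x,x\rangle}$. A root system is a finite set $R\subset\mathbb{R}^N\setminus\{0\}$ with $s_\alpha(R)=R$ and $R\cap\mathbb{R}\alpha=\{\pm\alpha\}$ for all $\alpha\in R$, where $s_\alpha(x)=x-2\frac{\langle x,\alpha\rangle}{|\alpha|^2}\alpha$. A subsystem $R''$ of $R$ is a subset such that $\alpha\in R''\Rightarrow-\alpha\in R''$, and $\alpha,\beta\in R''$, $\alpha+\beta\in R\Rightarrow\alpha+\beta\in R''$; it is an orthogonal subsystem if its roots are pairwise orthogonal (apart from $\pm$ pairs). A positive orthogonal subsystem $R'$ is a subset of an orthogonal subsystem $R''$ with $R''=R'\cup(-R')$, $R'\cap(-R')=\emptyset$; so the elements of $R'$ are pairwise orthogonal. Each $\rho_i$ maps polynomials to polynomials. *)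

From HB Require Import structures.
From mathcomp Require Import all_boot all_order all_algebra.
From mathcomp Require Import mpoly.
From Stdlib Require Import ClassicalEpsilon.
Set Implicit Arguments. Unset Strict Implicit. Unset Printing Implicit Defensive.
Import Order.TTheory GRing.Theory Num.Theory.
Local Open Scope ring_scope.

Section Defs.
Variables (R : realFieldType) (N : nat).
Local Notation vec := 'rV[R]_N.

Definition dot (x y : vec) : R := \sum_(k < N) x 0 k * y 0 k.
Definition nrm2 (x : vec) : R := dot x x.

Definition refl (a x : vec) : vec := x - ((2 * dot x a) / nrm2 a) *: a.

Definition root_system (Rs : seq vec) : Prop :=
  [/\ 0 \notin Rs,
      (forall a b, a \in Rs -> b \in Rs -> refl a b \in Rs) &
      (forall a b, a \in Rs -> b \in Rs -> (exists c : R, b = c *: a) ->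
         b = a \/ b = - a)].

Definition subsystem (Rs S : seq vec) : Prop :=
  [/\ {subset S <= Rs},
      (forall a, a \in S -> - a \in S) &
      (forall a b, a \in S -> b \in S -> a + b \in Rs -> a + b \in S)].

Definition orthogonal_subsystem (Rs S : seq vec) : Prop :=
  subsystem Rs S /\
  (forall a b, a \in S -> b \in S -> b != a -> b != - a -> dot a b = 0).

Definition positive_orthogonal_subsystem (Rs : seq vec) (n : nat)
    (al : 'I_n -> vec) : Prop :=
  injective al /\
  exists S : seq vec, [/\ orthogonal_subsystem Rs S,
    (forall v, v \in S <-> (exists i, v = al i) \/ (exists i, v = - al i)) &
    (forall i j, al i <> - al j)].

Local Notation P := {mpoly R[N]}.

Definition linp (a : vec) : P := \sum_(k < N) a 0 k *: 'X_k.

(* tau_a as a tuple of coordinate polynomials: (tau_a x)_k = x_k - <x,a>/|a|^2 a_k *)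
Definition tau_tuple (a : vec) : N.-tuple P :=
  [tuple ('X_k - (a 0 k / nrm2 a) *: linp a) | k < N].

Definition comp_tau (a : vec) (f : P) : P := f \mPo tau_tuple a.

(* rho_a f = (f - f o tau_a) / <x, a>: the polynomial q with <x,a> q = f - f o tau_a *)
Definition rho (a : vec) (f : P) : P :=
  epsilon (inhabits 0) (fun q : P => linp a * q = f - comp_tau a f).

Definition dderiv (a : vec) (f : P) : P := \sum_(k < N) a 0 k *: mderiv k f.

End Defs.

From HB Require Import structures.
From mathcomp Require Import all_boot all_order all_algebra.
From mathcomp Require Import mpoly.
From mathcomp Require Import ring.
From Stdlib Require Import ClassicalEpsilon.
Set Implicit Arguments. Unset Strict Implicit. Unset Printing Implicit Defensive.
Import Order.TTheory GRing.Theory Num.Theory.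
Local Open Scope ring_scope.

(* Because <x,a> divides f - f o tau_a, rho_a f is the unique polynomial q with
   <x,a> q = f - f o tau_a (polynomials form a domain and <x,a> <> 0 for a root).
   For orthogonal a, b the substitutions tau_a and tau_b commute and tau_a fixes
   <x,b>, so <x,b> <x,a> rho_a rho_b f = f - tau_b f - tau_a f + tau_a tau_b f,
   which is symmetric in a and b.  Similarly, for a orthogonal to b the derivation
   d_a commutes with tau_b and kills <x,b>, so applying d_a to
   <x,b> rho_b f = f - f o tau_b and cancelling <x,b> gives d_a rho_b = rho_b d_a. *)

Lemma subrBAC (V : zmodType) (x y z w : V) : x - y - (z - w) = x - z - (y - w).
Proof. by rewrite !opprB !addrA -!(addrAC _ w) addrAC. Qed.

Lemma mulfCAI (D : idomainType) (x y u v : D) : x != 0 -> y != 0 ->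
  x * (y * u) = y * (x * v) -> u = v.
Proof. by move=> x0 y0; rewrite mulrCA => /(mulfI y0)/(mulfI x0). Qed.

Lemma mpoly_gen_ind (R : nzRingType) (n : nat) (Q : {mpoly R[n]} -> Prop) :
  Q 1 -> (forall c p, Q p -> Q (c *: p)) ->
  (forall p q, Q p -> Q q -> Q (p + q)) -> (forall p q, Q p -> Q q -> Q (p * q)) ->
  (forall k, Q 'X_k) -> forall p, Q p.
Proof.
move=> Q1 QZ QD QM QX; elim/mpolyind => [|c m p _ _ Qp].
  by rewrite -(scale0r 1); apply: QZ.
apply: QD => //; apply: QZ; rewrite mpolyXE_id; apply: big_ind => //.
by move=> k _; elim: (m k) => [|e IHe]; rewrite ?expr0 // exprS; apply: QM.
Qed.

HB.instance Definition _ (R : realFieldType) (N : nat) (a : 'rV[R]_N) :=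
  GRing.LRMorphism.copy (comp_tau a) (comp_mpoly (tau_tuple a)).

Lemma dderiv_is_linear (R : realFieldType) (N : nat) (a : 'rV[R]_N) :
  linear (dderiv a).
Proof.
move=> c f g; rewrite /dderiv scaler_sumr -big_split; apply: eq_bigr => k _ /=.
by rewrite linearP scalerDr !scalerA mulrC.
Qed.

HB.instance Definition _ (R : realFieldType) (N : nat) (a : 'rV[R]_N) :=
  GRing.isLinear.Build R {mpoly R[N]} {mpoly R[N]} _ (dderiv a)
    (dderiv_is_linear a).

Section Reflections.
Variables (R : realFieldType) (N : nat).
Local Notation vec := 'rV[R]_N.
Local Notation P := {mpoly R[N]}.
Implicit Types (a b : vec) (f g : P).

Lemma dotC a b : dot a b = dot b a.
Proof. by apply: eq_bigr => k _; rewrite mulrC. Qed.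

Lemma nrm2_neq0 a : a != 0 -> nrm2 a != 0.
Proof.
apply: contra; rewrite /nrm2 /dot psumr_eq0 => [/allP a0|k _]; last first.
  by rewrite -expr2 sqr_ge0.
apply/eqP/rowP => k; rewrite mxE.
by have /implyP/(_ isT) := a0 k (mem_index_enum _); rewrite mulf_eq0 orbb => /eqP.
Qed.

Lemma meval_linp a b : (linp b).@[fun k => a 0 k] = dot b a.
Proof.
by rewrite /linp raddf_sum /=; apply: eq_bigr => k _; rewrite mevalZ mevalXU.
Qed.

Lemma linp_neq0 a : a != 0 -> linp a != 0.
Proof.
by move=> /nrm2_neq0; apply: contra => /eqP la0; rewrite /nrm2 -meval_linp la0 meval0.
Qed.

Lemma comp_tauX a k : comp_tau a 'X_k = 'X_k - (a 0 k / nrm2 a) *: linp a.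
Proof. by rewrite /comp_tau comp_mpolyXU -tnth_nth tnth_mktuple. Qed.

Lemma comp_tau_linp a b :
  comp_tau a (linp b) = linp b - (dot b a / nrm2 a) *: linp a.
Proof.
rewrite {1}/linp raddf_sum /=.
under eq_bigr => k _ do rewrite linearZ /= comp_tauX scalerBr scalerA.
rewrite sumrB -scaler_suml /dot mulr_suml; congr (_ - _ *: _).
by apply: eq_bigr => k _; rewrite mulrA.
Qed.

Lemma comp_tau_linp_orth a b : dot b a = 0 -> comp_tau a (linp b) = linp b.
Proof. by move=> ba; rewrite comp_tau_linp ba mul0r scale0r subr0. Qed.

Lemma comp_tauC a b f : dot a b = 0 ->
  comp_tau a (comp_tau b f) = comp_tau b (comp_tau a f).
Proof.
move=> ab; elim/mpoly_gen_ind: f => [|c p|p q|p q|k].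
- by rewrite !rmorph1.
- by rewrite !linearZ /= => ->.
- by rewrite !rmorphD /= => -> ->.
- by rewrite !rmorphM /= => -> ->.
rewrite !comp_tauX !rmorphB /= !linearZ /= !comp_tauX.
rewrite !comp_tau_linp_orth ?(dotC b) //; ring.
Qed.

Lemma rho_exists a f : exists q, linp a * q = f - comp_tau a f.
Proof.
elim/mpoly_gen_ind: f => [|c p [q pq]|p p' [q pq] [q' pq']|p p' [q pq] [q' pq']|k].
- by exists 0; rewrite rmorph1 mulr0 subrr.
- by exists (c *: q); rewrite linearZ -scalerAr pq scalerBr.
- by exists (q + q'); rewrite rmorphD mulrDr pq pq' addrACA opprD.
- exists (p * q' + q * comp_tau a p').
  by rewrite rmorphM mulrDr mulrCA pq' mulrA pq; ring.
- exists (a 0 k / nrm2 a)%:MP.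
  by rewrite comp_tauX opprB addrC subrK mulrC mul_mpolyC.
Qed.

Lemma rho_spec a f : linp a * rho a f = f - comp_tau a f.
Proof. exact: (epsilon_spec _ _ (rho_exists a f)). Qed.

Lemma mul_linp_rho_rho a b f : dot b a = 0 ->
  linp b * (linp a * rho a (rho b f)) =
  f - comp_tau b f - (comp_tau a f - comp_tau a (comp_tau b f)).
Proof.
move=> ba; rewrite rho_spec mulrBr -{2}(comp_tau_linp_orth ba) -rmorphM /=.
by rewrite rho_spec [in LHS]rmorphB.
Qed.

Lemma rhoC a b f : a != 0 -> b != 0 -> dot a b = 0 ->
  rho a (rho b f) = rho b (rho a f).
Proof.
move=> a0 b0 ab; apply: (mulfCAI (linp_neq0 b0) (linp_neq0 a0)).
(* Occurrence selectors keep the unifier from unfolding unrelated [comp_tau] terms. *)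
rewrite [LHS](mul_linp_rho_rho _ (etrans (dotC b a) ab)).
rewrite [RHS](mul_linp_rho_rho _ ab) [LHS]subrBAC.
congr (_ - (_ - _)).
exact: comp_tauC.
Qed.

Lemma dderivM a f g : dderiv a (f * g) = dderiv a f * g + f * dderiv a g.
Proof.
rewrite /dderiv mulr_suml mulr_sumr -big_split; apply: eq_bigr => k _ /=.
by rewrite mderivM scalerDr -scalerAl -scalerAr.
Qed.

Lemma dderivC a c : dderiv a c%:MP = 0.
Proof. by rewrite /dderiv big1 // => k _; rewrite mderivC scaler0. Qed.

Lemma dderivX a k : dderiv a 'X_k = (a 0 k)%:MP.
Proof.
rewrite /dderiv (bigD1 k) //= big1 ?addr0 => [|j jk]; last first.
  by rewrite mderivX mnm1E eq_sym (negbTE jk) scale0r scaler0.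
by rewrite mderivX mnm1E eqxx scale1r -{1}(add0m U_(k)%MM) addmK mpolyX0 -alg_mpolyC.
Qed.

Lemma dderiv_linp a b : dderiv a (linp b) = (dot b a)%:MP.
Proof.
rewrite /linp /dot !raddf_sum /=; apply: eq_bigr => k _.
by rewrite linearZ /= dderivX -mul_mpolyC -mpolyCM.
Qed.

Lemma dderiv_comp_tau a b f : dot a b = 0 ->
  dderiv a (comp_tau b f) = comp_tau b (dderiv a f).
Proof.
move=> ab; elim/mpoly_gen_ind: f => [|c p|p q|p q|k].
- by rewrite rmorph1 -mpolyC1 dderivC raddf0.
- by rewrite !linearZ /= => ->.
- by rewrite !(rmorphD, raddfD) /= => -> ->.
- by rewrite rmorphM !dderivM rmorphD !rmorphM /= => -> ->.
rewrite comp_tauX [LHS]raddfB /= linearZ /= dderiv_linp (dotC b) ab scaler0 subr0.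
by rewrite dderivX /comp_tau comp_mpolyC.
Qed.

Lemma dderiv_rho a b f : b != 0 -> dot a b = 0 ->
  dderiv a (rho b f) = rho b (dderiv a f).
Proof.
move=> b0 ab; apply: (mulfI (linp_neq0 b0)); rewrite rho_spec.
have -> : linp b * dderiv a (rho b f) = dderiv a (linp b * rho b f).
  by rewrite dderivM dderiv_linp (dotC b) ab mul0r add0r.
by rewrite rho_spec raddfB /= dderiv_comp_tau.
Qed.

End Reflections.

Section PositiveOrthogonalSubsystem.
Variables (R : realFieldType) (N : nat) (Rs : seq 'rV[R]_N).
Variables (n : nat) (al : 'I_n -> 'rV[R]_N).
Hypothesis alRs : positive_orthogonal_subsystem Rs al.

Let al_in i : exists S, [/\ orthogonal_subsystem Rs S & al i \in S].
Proof.
case: alRs => _ [S [RsS memS _]]; exists S; split=> //.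
by apply/memS; left; exists i.
Qed.

Lemma pos_orth_subsystem_neq0 i : root_system Rs -> al i != 0.
Proof.
case=> Rs0 _ _; have [S [[[SRs _ _] _] alS]] := al_in i.
by apply: contraNneq Rs0 => <-; exact: SRs.
Qed.

Lemma pos_orth_subsystem_orth i j : i != j -> dot (al i) (al j) = 0.
Proof.
case: alRs => al_inj [S [[_ Sorth] memS al_neqN]] ij.
apply: Sorth; [by apply/memS; left; exists i | by apply/memS; left; exists j | |].
- by apply: contra_neq ij => /al_inj.
- by apply/eqP; exact: al_neqN.
Qed.

End PositiveOrthogonalSubsystem.

Theorem proposition3p1 (R : realFieldType) (N : nat) (Rs : seq 'rV[R]_N)
    (n : nat) (al : 'I_n -> 'rV[R]_N) :
  root_system Rs ->
  positive_orthogonal_subsystem Rs al ->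
  (forall (i j : 'I_n) (f : {mpoly R[N]}),
      rho (al i) (rho (al j) f) - rho (al j) (rho (al i) f) = 0) /\
  (forall (i : 'I_n) (a : 'rV[R]_N) (f : {mpoly R[N]}),
      dot a (al i) = 0 ->
      dderiv a (rho (al i) f) - rho (al i) (dderiv a f) = 0).
Proof.
move=> RsR alRs; have al0 i := pos_orth_subsystem_neq0 alRs i RsR.
split=> [i j f | i a f ai]; apply/eqP; rewrite subr_eq0; apply/eqP.
- have [-> // | ij] := eqVneq i j.
  exact: rhoC (al0 i) (al0 j) (pos_orth_subsystem_orth alRs ij).
- exact: dderiv_rho (al0 i) ai.
Qed.
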